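(* Let $A=(\alpha_n)_{n\in\mathbb{N}}$ and $B=(\beta_m)_{m\in\mathbb{N}}$ be sequences of positive real numbers with $\alpha_j\neq\alpha_\ell$ and $\beta_j\neq\beta_\ell$ for all $1\le j<\ell<\infty$, and set $\alpha_0=\beta_0=0$. Consider urn model I with these weights, and let $X_{n,m}$ be the number of white balls remaining when the process stops, started from $n$ white and $m$ black balls. Then for all $n,m\ge 1$ and $0\le k\le n$, \[ \mathbb{P}\{X_{n,m}=k\}=\Big(\prod_{h=1}^{m}\beta_h\Big)\Big(\prod_{h=k+1}^{n}\alpha_h\Big)\sum_{\ell=1}^{m}\frac{1}{\Big(\prod_{j=k}^{n}(\alpha_j+\beta_\ell)\Big)\Big(\prod_{\substack{i=1\\ i\neq\ell}}^{m}(\beta_i-\beta_\ell)\Big)} \] \[ =\Big(\prod_{h=1}^{m}\beta_h\Big)\Big(\prod_{h=k+1}^{n}\alpha_h\Big)\sum_{\ell=k}^{n}\frac{1}{\Big(\prod_{\substack{j=k\\ j\neq\ell}}^{n}(\alpha_j-\alpha_\ell)\Big)\Big(\prod_{i=1}^{m}(\beta_i+\alpha_\ell)\Big)}. \]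
   Context: Urn model I (sampling without replacement with general weights): an urn initially contains $n$ white and $m$ black balls. At each step, if the urn currently contains $n'$ white and $m'$ black balls, a white ball is drawn with probability $\alpha_{n'}/(\alpha_{n'}+\beta_{m'})$ and a black ball with probability $\beta_{m'}/(\alpha_{n'}+\beta_{m'})$; the drawn ball is discarded. The process stops as soon as one colour is exhausted. $X_{n,m}$ denotes the number of white balls in the urn when the process stops (so $X_{n,m}=0$ if the white balls are exhausted first, and otherwise it is the number of white balls left when all black balls have been drawn). Empty products equal $1$. *)

From mathcomp Require Import all_boot all_order all_algebra.
From mathcomp Require Import reals.
Set Implicit Arguments. Unset Strict Implicit. Unset Printing Implicit Defensive.
Import Order.TTheory GRing.Theory Num.Theory.
Local Open Scope ring_scope.

(* Law of X_{n,m} in urn model I, defined by first-step analysis of the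
   Markov chain (n', m') -> (n'-1, m') w.p. alpha n'/(alpha n'+beta m'),
   (n', m') -> (n', m'-1) w.p. beta m'/(alpha n'+beta m'),
   stopped as soon as n' = 0 or m' = 0.
   urnP alpha beta n m k = P{X_{n,m} = k}. *)
Fixpoint urnP (R : realType) (alpha beta : nat -> R) (n : nat) : nat -> nat -> R :=
  match n with
  | 0 => fun _ k => (k == 0%N)%:R
  | n'.+1 =>
      fix g (m : nat) : nat -> R :=
        match m with
        | 0 => fun k => (k == n'.+1)%:R
        | m'.+1 => fun k =>
            alpha n'.+1 / (alpha n'.+1 + beta m'.+1) * urnP alpha beta n' m'.+1 k
          + beta m'.+1 / (alpha n'.+1 + beta m'.+1) * g m' k
        end
  end.

From mathcomp Require Import all_boot all_order all_algebra.
From mathcomp Require Import reals ring.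
Import Order.TTheory GRing.Theory Num.Theory.
Local Open Scope ring_scope.

(* Both closed forms satisfy the first-step recursion of the urn together with
   its boundary values, so they agree with the law of X_{n,m}.  Once the common
   factor (prod beta)(prod alpha) is pulled out, the recursion for each residue
   sum S reads (alpha_{n+1} + beta_{m+1}) S(n+1,m+1) = S(n,m+1) + S(n+1,m), which
   is the partial fraction identity (u + v)/(u v) = 1/u + 1/v summand by summand.
   The boundary values are the partial fraction expansion of
   1 / prod_j (t + z_j) and the vanishing of sum_l 1 / prod_(j <> l) (z_j - z_l). *)

Lemma injective_cons_neq {T rT : eqType} {f : T -> rT} {q s x} :
  q \notin s -> {in q :: s &, injective f} -> x \in s -> f x != f q.
Proof. by move=> qs f_inj xs; apply: contraNneq qs => /f_inj <-; rewrite ?inE ?eqxx ?xs ?orbT. Qed.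

Lemma lt_neq_inj {T : eqType} {P : pred nat} {f : nat -> T} :
  (forall i j, P i -> (i < j)%N -> f i != f j) ->
  forall i j, P i -> P j -> f i = f j -> i = j.
Proof.
move=> f_neq i j Pi Pj fij; case: (ltngtP i j) => // ij.
- by move: (f_neq _ _ Pi ij); rewrite fij eqxx.
- by move: (f_neq _ _ Pj ij); rewrite fij eqxx.
Qed.

Lemma perm_index_iotaSr {a b} : (a <= b)%N -> perm_eq (index_iota a b.+1) (b :: index_iota a b).
Proof. by move=> ab; rewrite /index_iota subSn // -addn1 iotaD subnKC // cats1 perm_rcons. Qed.

Lemma index_iota_seq1 a : index_iota a a.+1 = [:: a].
Proof. by rewrite /index_iota subSnn. Qed.

Section ResidueSums.

Context {F : fieldType}.
Implicit Types (x y : nat -> F) (J I : seq nat).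

(* Up to sign, the sum of the residues of
   z |-> 1 / (prod_(j in J) (x j + z) * prod_(i in I) (y i - z)) at its poles y l, l in I. *)
Definition residue_sum x y J I : F :=
  \sum_(l <- I) ((\prod_(j <- J) (x j + y l)) * \prod_(i <- I | i != l) (y i - y l))^-1.

Lemma residue_sum_perm x y {J J' I I'} :
  perm_eq J J' -> perm_eq I I' -> residue_sum x y J I = residue_sum x y J' I'.
Proof.
move=> pJ pI; rewrite /residue_sum (perm_big _ pI); apply: eq_bigr => l _.
by rewrite (perm_big _ pJ) (perm_big _ pI).
Qed.

Lemma prod_cons_neq (G : nat -> F) q I l : q != l ->
  \prod_(i <- q :: I | i != l) G i = G q * \prod_(i <- I | i != l) G i.
Proof. by move=> ql; rewrite big_cons ql. Qed.

Lemma prod_cons_eq (G : nat -> F) q I : q \notin I ->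
  \prod_(i <- q :: I | i != q) G i = \prod_(i <- I) G i.
Proof.
move=> qI; rewrite big_cons eqxx big_seq_cond [RHS]big_seq; apply: eq_bigl => i.
by case: (boolP (i \in I)) => //= iI; apply: contraNneq qI => <-.
Qed.

Lemma mulr_inv_split (u v P Q : F) : u != 0 -> v != 0 ->
  (u + v) * ((u * P) * (v * Q))^-1 = (P * (v * Q))^-1 + ((u * P) * Q)^-1.
Proof.
move=> u0 v0; have [->|P0] := eqVneq P 0; first by rewrite !(mulr0, mul0r) invr0 addr0 mulr0.
have [->|Q0] := eqVneq Q 0; first by rewrite !(mulr0, mul0r) invr0 addr0 mulr0.
by field; rewrite u0 v0 P0 Q0.
Qed.

(* The residue at y q absorbs the factor x p + y q; every other residue splits by
   [mulr_inv_split] with u = x p + y l and v = y q - y l. *)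
Lemma residue_sum_cons x y p q J I :
  q \notin I -> {in q :: I &, injective y} -> (forall l, l \in q :: I -> x p + y l != 0) ->
  (x p + y q) * residue_sum x y (p :: J) (q :: I) =
  residue_sum x y J (q :: I) + residue_sum x y (p :: J) I.
Proof.
move=> qI y_inj xy0; have xyq := xy0 q (mem_head q I).
rewrite /residue_sum big_cons [in X in _ = X + _]big_cons mulrDr -addrA.
congr (_ + _); first by rewrite !prod_cons_eq // big_cons -mulrA invfM mulVKf.
rewrite mulr_sumr -big_split /=; apply: eq_big_seq => l lI.
have ql : q != l by apply: contraNneq qI => ->.
have -> : x p + y q = (x p + y l) + (y q - y l) by rewrite addrA addrAC addrK.
rewrite !prod_cons_neq // !big_cons; apply: mulr_inv_split; first by rewrite xy0 // inE lI orbT.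
by rewrite subr_eq0 eq_sym (injective_cons_neq qI y_inj lI).
Qed.

Lemma residue_sum_nil_cons x y q I : q \notin I ->
  residue_sum x y [::] (q :: I) =
  (\prod_(i <- I) (- y q + y i))^-1 - residue_sum (fun=> - y q) y [:: q] I.
Proof.
move=> qI; rewrite /residue_sum big_cons prod_cons_eq // big_nil mul1r.
under [\prod_(i <- I) (y i - y q)]eq_bigr do rewrite addrC.
congr (_ + _); rewrite -sumrN; apply: eq_big_seq => l lI.
have ql : q != l by apply: contraNneq qI => ->.
by rewrite prod_cons_neq // big_nil big_seq1 mul1r -invrN -mulNr opprD opprK.
Qed.

Lemma residue_sum1 x y p I :
  I != [::] -> uniq I -> {in I &, injective y} -> (forall l, l \in I -> x p + y l != 0) ->
  residue_sum x y [:: p] I = (\prod_(i <- I) (x p + y i))^-1.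
Proof.
elim: I x p => [//|q I IH] x p _ /= /andP[qI uI] y_inj xy0.
have xyq := xy0 q (mem_head q I).
have [-> | I0] := eqVneq I [::].
  by rewrite /residue_sum !big_cons !big_nil eqxx !mulr1 addr0.
have y_injI : {in I &, injective y} by apply: sub_in2 y_inj => i iI; rewrite inE iI orbT.
have yqI l : l \in I -> - y q + y l != 0.
  by move=> lI; rewrite addrC subr_eq0 (injective_cons_neq qI y_inj lI).
have rs0 : residue_sum x y [::] (q :: I) = 0.
  by rewrite residue_sum_nil_cons // IH // subrr.
apply: (mulfI xyq); rewrite residue_sum_cons // rs0 add0r IH //.
- by rewrite big_cons invfM mulVKf.
- by move=> l lI; rewrite xy0 // inE lI orbT.
Qed.

Lemma residue_sum0 x y I :
  (1 < size I)%N -> uniq I -> {in I &, injective y} -> residue_sum x y [::] I = 0.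
Proof.
case: I => [//|q I] /= sI /andP[qI uI] y_inj.
rewrite residue_sum_nil_cons // residue_sum1 ?subrr //.
- by case: I sI {qI uI y_inj}.
- by apply: sub_in2 y_inj => i iI; rewrite inE iI orbT.
- by move=> l lI; rewrite addrC subr_eq0 (injective_cons_neq qI y_inj lI).
Qed.

Lemma residue_sum_iota_step x y a c n m : (a <= n.+1)%N -> (c <= m.+1)%N ->
  {in index_iota c m.+2 &, injective y} -> (forall l, l \in index_iota c m.+2 -> x n.+1 + y l != 0) ->
  (x n.+1 + y m.+1) * residue_sum x y (index_iota a n.+2) (index_iota c m.+2) =
  residue_sum x y (index_iota a n.+1) (index_iota c m.+2)
  + residue_sum x y (index_iota a n.+2) (index_iota c m.+1).
Proof.
move=> an cm y_inj xy0.
have pJ := perm_index_iotaSr an; have pI := perm_index_iotaSr cm.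
rewrite (residue_sum_perm x y pJ pI) (residue_sum_perm x y (perm_refl _) pI).
rewrite (residue_sum_perm x y pJ (perm_refl _)) residue_sum_cons //.
- by rewrite mem_index_iota ltnn andbF.
- by apply: sub_in2 y_inj => i; rewrite (perm_mem pI).
- by move=> l; rewrite -(perm_mem pI); apply: xy0.
Qed.

End ResidueSums.

Definition urn_weight {F : fieldType} (alpha beta : nat -> F) k n m : F :=
  (\prod_(1 <= h < m.+1) beta h) * (\prod_(k.+1 <= h < n.+1) alpha h).

Lemma urn_weight_step (F : fieldType) (alpha beta : nat -> F) k (g : nat -> nat -> F) n m :
  (k <= n)%N -> alpha n.+1 + beta m.+1 != 0 ->
  (alpha n.+1 + beta m.+1) * g n.+1 m.+1 = g n m.+1 + g n.+1 m ->
  urn_weight alpha beta k n.+1 m.+1 * g n.+1 m.+1 =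
    alpha n.+1 / (alpha n.+1 + beta m.+1) * (urn_weight alpha beta k n m.+1 * g n m.+1)
  + beta m.+1 / (alpha n.+1 + beta m.+1) * (urn_weight alpha beta k n.+1 m * g n.+1 m).
Proof.
move=> kn ab0 g_step; rewrite /urn_weight (big_nat_recr m.+1) // (big_nat_recr n.+1) //=.
have -> : g n.+1 m.+1 = (g n m.+1 + g n.+1 m) / (alpha n.+1 + beta m.+1).
  by rewrite -g_step mulrC mulKf.
ring.
Qed.

Section UrnRecursion.

Variables (R : realType) (alpha beta : nat -> R).

Lemma urnP_step n m k : urnP alpha beta n.+1 m.+1 k =
  alpha n.+1 / (alpha n.+1 + beta m.+1) * urnP alpha beta n m.+1 k
  + beta m.+1 / (alpha n.+1 + beta m.+1) * urnP alpha beta n.+1 m k.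
Proof. by []. Qed.

Lemma urnP_black0 n k : urnP alpha beta n.+1 0 k = (k == n.+1)%:R.
Proof. by []. Qed.

Lemma urnP_gt n m k : (n < k)%N -> urnP alpha beta n m k = 0.
Proof.
elim: n m => [|n IH] m nk; first by case: k nk.
elim: m => [|m IHm]; first by rewrite urnP_black0 gtn_eqF.
by rewrite urnP_step IH ?(ltnW nk) // IHm !mulr0 addr0.
Qed.

Lemma urnP_diag n m : alpha 0 = 0 -> (forall i, (0 < i)%N -> beta i != 0) ->
  urnP alpha beta n m n =
  (\prod_(1 <= i < m.+1) beta i) / \prod_(1 <= i < m.+1) (alpha n + beta i).
Proof.
move=> alpha0 beta_neq0; case: n => [|n].
  under [X in _ / X]eq_bigr do rewrite alpha0 add0r.
  rewrite [LHS]/= divff // big_nat prodf_seq_neq0; apply/allP => i _.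
  by apply/implyP => /andP[i0 _]; rewrite beta_neq0.
elim: m => [|m IHm]; first by rewrite urnP_black0 eqxx !big_geq // divr1.
rewrite urnP_step urnP_gt // mulr0 add0r IHm.
rewrite (big_nat_recr m.+1) //= (big_nat_recr m.+1 1) //= invfM.
ring.
Qed.

Variables (k : nat) (f : nat -> nat -> R).
Hypothesis f_diag : forall m, (0 < m)%N -> f k m = urnP alpha beta k m k.
Hypothesis f_black0 : forall n, (k < n)%N -> f n 0 = 0.
Hypothesis f_step : forall n m, (k <= n)%N ->
  f n.+1 m.+1 = alpha n.+1 / (alpha n.+1 + beta m.+1) * f n m.+1
              + beta m.+1 / (alpha n.+1 + beta m.+1) * f n.+1 m.

Lemma urnP_eq_solution n m : (k <= n)%N -> (0 < m)%N -> urnP alpha beta n m k = f n m.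
Proof.
have above_diag n' m' : (k < n')%N -> urnP alpha beta n' m' k = f n' m'.
  elim: n' m' => [//|n' IH] m'; rewrite ltnS => kn.
  elim: m' => [|m' IHm]; first by rewrite urnP_black0 f_black0 // ltn_eqF.
  rewrite urnP_step f_step // IHm; congr (_ * _ + _).
  by move: kn; rewrite leq_eqVlt => /orP[/eqP <-|kn]; [rewrite f_diag | rewrite IH].
by rewrite leq_eqVlt => /orP[/eqP <- m0|/above_diag //]; rewrite f_diag.
Qed.

End UrnRecursion.

Lemma urnP_eq_weighted (R : realType) (alpha beta : nat -> R) k (g : nat -> nat -> R) :
  (forall n m, alpha n.+1 + beta m.+1 != 0) ->
  (forall m, (0 < m)%N -> urn_weight alpha beta k k m * g k m = urnP alpha beta k m k) ->
  (forall n, (k < n)%N -> g n 0 = 0) ->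
  (forall n m, (k <= n)%N -> (alpha n.+1 + beta m.+1) * g n.+1 m.+1 = g n m.+1 + g n.+1 m) ->
  forall n m, (k <= n)%N -> (0 < m)%N -> urnP alpha beta n m k = urn_weight alpha beta k n m * g n m.
Proof.
move=> ab0 g_diag g_black0 g_step; apply: urnP_eq_solution => // [n kn | n m kn] /=.
  by rewrite g_black0 ?mulr0.
by apply: urn_weight_step; rewrite ?g_step.
Qed.

Section UrnFormulas.

Variables (R : realType) (alpha beta : nat -> R).
Hypothesis alpha0 : alpha 0 = 0.
Hypothesis alpha_ge0 : forall j, 0 <= alpha j.
Hypothesis beta_gt0 : forall j, (0 < j)%N -> 0 < beta j.
Hypothesis alpha_inj : injective alpha.
Hypothesis beta_inj : forall i j, (0 < i)%N -> (0 < j)%N -> beta i = beta j -> i = j.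

Lemma alpha_beta_neq0 j l : (0 < l)%N -> alpha j + beta l != 0.
Proof. by move=> l0; rewrite gt_eqF // ltr_wpDl ?beta_gt0. Qed.

Lemma beta_inj_iota b : {in index_iota 1 b &, injective beta}.
Proof. by move=> i j; rewrite !mem_index_iota => /andP[i0 _] /andP[j0 _]; apply: beta_inj. Qed.

Lemma urnP_black_residues k n m : (k <= n)%N -> (0 < m)%N ->
  urnP alpha beta n m k =
  urn_weight alpha beta k n m * residue_sum alpha beta (index_iota k n.+1) (index_iota 1 m.+1).
Proof.
move: n m; apply: urnP_eq_weighted => [n m|m m0|n kn|n m kn].
- exact: alpha_beta_neq0.
- rewrite urnP_diag // => [|i i0]; last by rewrite gt_eqF ?beta_gt0.
  rewrite /urn_weight [\prod_(k.+1 <= h < k.+1) _]big_geq // mulr1 index_iota_seq1 residue_sum1 //.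
  + by case: m m0.
  + exact: iota_uniq.
  + exact: beta_inj_iota.
  + by move=> l; rewrite mem_index_iota => /andP[l0 _]; apply: alpha_beta_neq0.
- by rewrite /residue_sum big_nil.
- apply: residue_sum_iota_step; [exact: leqW | by [] | exact: beta_inj_iota |].
  by move=> l; rewrite mem_index_iota => /andP[l0 _]; apply: alpha_beta_neq0.
Qed.

Lemma urnP_white_residues k n m : (k <= n)%N -> (0 < m)%N ->
  urnP alpha beta n m k =
  urn_weight alpha beta k n m * residue_sum beta alpha (index_iota 1 m.+1) (index_iota k n.+1).
Proof.
move: n m; apply: urnP_eq_weighted => [n m|m m0|n kn|n m kn].
- exact: alpha_beta_neq0.
- rewrite urnP_diag // => [|i i0]; last by rewrite gt_eqF ?beta_gt0.
  rewrite /urn_weight [\prod_(k.+1 <= h < k.+1) _]big_geq // mulr1 index_iota_seq1 /residue_sum big_seq1.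
  rewrite big_cons eqxx big_nil /= mulr1; congr (_ / _).
  by apply: eq_bigr => i _; rewrite addrC.
- rewrite residue_sum0 //.
  + by rewrite /index_iota size_iota subSn ?ltnS ?subn_gt0 // ltnW.
  + exact: iota_uniq.
  + by move=> i j _ _; apply: alpha_inj.
- rewrite addrC [RHS]addrC residue_sum_iota_step //; first exact: leqW.
  + by move=> i j _ _; apply: alpha_inj.
  + by move=> l _; rewrite addrC alpha_beta_neq0.
Qed.

End UrnFormulas.

Theorem theorem1 (R : realType) (alpha beta : nat -> R)
  (ha0 : alpha 0%N = 0) (hb0 : beta 0%N = 0)
  (hapos : forall j : nat, (1 <= j)%N -> 0 < alpha j)
  (hbpos : forall j : nat, (1 <= j)%N -> 0 < beta j)
  (hainj : forall j l : nat, (1 <= j)%N -> (j < l)%N -> alpha j != alpha l)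
  (hbinj : forall j l : nat, (1 <= j)%N -> (j < l)%N -> beta j != beta l)
  (n m k : nat) (hn : (1 <= n)%N) (hm : (1 <= m)%N) (hk : (k <= n)%N) :
  urnP alpha beta n m k =
    (\prod_(1 <= h < m.+1) beta h) * (\prod_(k.+1 <= h < n.+1) alpha h) *
    \sum_(1 <= l < m.+1)
       ((\prod_(k <= j < n.+1) (alpha j + beta l)) *
        (\prod_(1 <= i < m.+1 | i != l) (beta i - beta l)))^-1
  /\
  urnP alpha beta n m k =
    (\prod_(1 <= h < m.+1) beta h) * (\prod_(k.+1 <= h < n.+1) alpha h) *
    \sum_(k <= l < n.+1)
       ((\prod_(k <= j < n.+1 | j != l) (alpha j - alpha l)) *
        (\prod_(1 <= i < m.+1) (beta i + alpha l)))^-1.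
Proof.
have alpha_ge0 j : 0 <= alpha j by case: j => [|j]; rewrite ?ha0 // ltW ?hapos.
have alpha_inj : injective alpha.
  move=> i j; apply: (@lt_neq_inj _ predT) => // {i j} [[|i]] j _ ij; last exact: hainj.
  by rewrite ha0 lt_eqF ?hapos.
have beta_inj := lt_neq_inj hbinj.
split; first by rewrite urnP_black_residues.
rewrite urnP_white_residues //; congr (_ * _).
by apply: eq_bigr => l _; rewrite mulrC.
Qed.
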